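(* Let $\kappa<0$ and $\mu<0$, and set $\sigma=\sqrt{\mu/\kappa}>0$. Fix a real constant $K_0$ and a choice of signs (the same choice in each formula below). For $\tau>0$ define \[ \tilde q_0(x)=\sigma\tanh\!\Big(\pm\sigma\sqrt{\tfrac{\kappa(\mu\tau-1)}{2}}\,x\pm K_0\Big),\qquad \tilde q_1(x)=\frac{1}{1-\mu\tau}\,\tilde q_0'(x), \] which give standing front solutions $e^{i\mu t}(\tilde q_0(x),\tilde q_1(x))$ of the NLSH system $i\partial_tq_0+\partial_xq_1=-\kappa|q_0|^2q_0$, $i\tau\partial_tq_1=\partial_xq_0-q_1$, and let \[ u^-(x)=\sigma\tanh\!\Big(\pm\sigma\sqrt{-\kappa/2}\,x\pm K_0\Big) \] (the amplitude of the dark-soliton ground state $e^{i\mu t}u^-(x)$ of the NLS equation $iu_t+u_{xx}+\kappa|u|^2u=0$). Then as $\tau\to0$, the family $\{\tilde q_0\}_{\tau>0}$ converges uniformly on $\mathbb{R}$ to $u^-$ at a rate linear in $\tau$, i.e. $\sup_{x\in\mathbb{R}}|\tilde q_0(x)-u^-(x)|=O(\tau)$, and $\{\tilde q_1\}_{\tau>0}$ converges uniformly on $\mathbb{R}$ to $(u^-)'$ at a rate linear in $\tau$.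
   Context: Standing-wave ansatz: $(q_0,q_1)(x,t)=e^{i\mu t}(\tilde q_0(x),\tilde q_1(x))$ with $\mu\in\mathbb{R}$, which reduces NLSH to $\tilde q_0'=(1-\mu\tau)\tilde q_1$, $\tilde q_1'=(\mu-\kappa\tilde q_0^2)\tilde q_0$. *)

From Stdlib Require Import Reals.
From Coquelicot Require Import Coquelicot.
Open Scope R_scope.

Definition tanh (y : R) : R := (exp y - exp (- y)) / (exp y + exp (- y)).

Definition sigma (kappa mu : R) : R := sqrt (mu / kappa).

(* standing-front amplitude q0~ for NLSH with relaxation parameter tau;
   s1, s2 are the chosen signs (+1 or -1). *)
Definition q0t (kappa mu K0 s1 s2 tau : R) (x : R) : R :=
  sigma kappa mu *
  tanh (s1 * sigma kappa mu * sqrt (kappa * (mu * tau - 1) / 2) * x + s2 * K0).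

Definition q1t (kappa mu K0 s1 s2 tau : R) (x : R) : R :=
  / (1 - mu * tau) * Derive (q0t kappa mu K0 s1 s2 tau) x.

Definition uminus (kappa mu K0 s1 s2 : R) (x : R) : R :=
  sigma kappa mu *
  tanh (s1 * sigma kappa mu * sqrt (- kappa / 2) * x + s2 * K0).

(* After the substitution y = s1 x, both q0~ and u^- are sigma tanh (c y + K)
   with rates c = sigma sqrt (kappa (mu tau - 1) / 2) and c0 = sigma sqrt (-kappa / 2),
   and u^- is the member tau = 0 of the family; moreover c - c0 = O(tau).
   Since tanh' = sech^2 and (sech^2)' are O(1/|y|), the mean value theorem in the
   rate shows that y |-> g (c y + K) moves by O((c - c0) / c0) uniformly in y when the
   rate changes from c0 to c.  The factor 1 / (1 - mu tau) in q1~ is 1 + O(tau). *)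
From Stdlib Require Import Reals Lra.
From Coquelicot Require Import Coquelicot.
Open Scope R_scope.

Definition sech2 (y : R) : R := / cosh y ^ 2.

Lemma cosh_ge_1 (y : R) : 1 <= cosh y.
Proof.
  unfold cosh. pose proof (exp_ineq1_le y). pose proof (exp_ineq1_le (- y)). lra.
Qed.

Lemma one_add_abs_le_cosh (y : R) : 1 + Rabs y <= 2 * cosh y.
Proof.
  unfold cosh. pose proof (exp_ineq1_le y). pose proof (exp_ineq1_le (- y)).
  pose proof (exp_pos y). pose proof (exp_pos (- y)).
  unfold Rabs; destruct (Rcase_abs y); lra.
Qed.

Lemma Rabs_tanh_le_1 (y : R) : Rabs (tanh y) <= 1.
Proof.
  pose proof (exp_pos y). pose proof (exp_pos (- y)).
  unfold tanh, Rdiv. rewrite Rabs_mult, Rabs_inv, (Rabs_right (exp y + exp (- y))) by lra.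
  apply (Rmult_le_reg_r (exp y + exp (- y))); [lra|].
  rewrite Rmult_assoc, Rinv_l by lra.
  unfold Rabs; destruct (Rcase_abs _); lra.
Qed.

Lemma is_derive_tanh (y : R) : is_derive tanh y (sech2 y).
Proof.
  pose proof (cosh_ge_1 y).
  unfold tanh, sech2, cosh in *. auto_derive.
  - lra.
  - rewrite exp_Ropp in *. field. pose proof (exp_pos y). split; nra.
Qed.

Lemma is_derive_sech2 (y : R) : is_derive sech2 y (-2 * tanh y * sech2 y).
Proof.
  pose proof (cosh_ge_1 y).
  unfold tanh, sech2, cosh in *. auto_derive.
  - nra.
  - rewrite exp_Ropp in *. field. pose proof (exp_pos y). split; nra.
Qed.

Lemma sech2_ge_0 (y : R) : 0 <= sech2 y.
Proof.
  pose proof (cosh_ge_1 y). unfold sech2.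
  apply Rlt_le, Rinv_0_lt_compat, pow_lt. lra.
Qed.

Lemma sech2_le_1 (y : R) : sech2 y <= 1.
Proof.
  pose proof (cosh_ge_1 y). unfold sech2. rewrite <- Rinv_1.
  apply Rinv_le_contravar; [lra | nra].
Qed.

Lemma sech2_decay (y : R) : sech2 y * (1 + Rabs y) <= 2.
Proof.
  pose proof (cosh_ge_1 y). pose proof (one_add_abs_le_cosh y).
  unfold sech2. apply (Rmult_le_reg_l (cosh y ^ 2)); [nra|].
  rewrite <- Rmult_assoc, Rinv_r by nra. nra.
Qed.

Lemma Rabs_sech2_decay (y : R) : Rabs (sech2 y) * (1 + Rabs y) <= 2.
Proof. rewrite Rabs_right by (apply Rle_ge, sech2_ge_0). apply sech2_decay. Qed.

Lemma Rabs_derive_sech2_decay (y : R) : Rabs (-2 * tanh y * sech2 y) * (1 + Rabs y) <= 4.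
Proof.
  pose proof (Rabs_tanh_le_1 y). pose proof (sech2_decay y). pose proof (sech2_ge_0 y).
  pose proof (Rabs_pos y). pose proof (Rabs_pos (tanh y)).
  rewrite !Rabs_mult, (Rabs_left (-2)), (Rabs_right (sech2 y)) by lra. nra.
Qed.

Section Dilation.

Variables (g g' : R -> R) (B : R).
Hypothesis g_derive : forall y, is_derive g y (g' y).
Hypothesis g'_decay : forall y, Rabs (g' y) * (1 + Rabs y) <= B.

Lemma is_derive_dilate (x k c : R) :
  is_derive (fun c => g (c * x + k)) c (x * g' (c * x + k)).
Proof.
  apply (is_derive_comp g (fun c => c * x + k)); [apply g_derive|].
  auto_derive; [easy | ring].
Qed.

(* At an intermediate rate c >= b the decay of g' absorbs |x|, since
   c |x| <= |c x + k| + |k| <= (1 + |c x + k|) (1 + |k|). *)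
Lemma dilation_lipschitz (a b x k : R) : 0 < b <= a ->
  Rabs (g (a * x + k) - g (b * x + k)) <= B * (1 + Rabs k) / b * (a - b).
Proof.
  intros [b_pos b_le_a].
  destruct (MVT_gen (fun c => g (c * x + k)) b a (fun c => x * g' (c * x + k)))
    as [c [c_range ->]].
  - intros c _. apply is_derive_dilate.
  - intros c _. apply continuity_pt_filterlim.
    apply (ex_derive_continuous (V := R_NormedModule) (fun c => g (c * x + k))).
    eexists; apply is_derive_dilate.
  - rewrite Rmin_left, Rmax_right in c_range by lra.
    set (y := c * x + k).
    assert (cx_le : Rabs x * c <= Rabs y + Rabs k).
    { replace (Rabs x * c) with (Rabs (y - k)).
      2: { unfold y. replace (c * x + k - k) with (x * c) by ring.
           rewrite Rabs_mult, (Rabs_right c); lra. }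
      unfold Rminus. rewrite <- (Rabs_Ropp k). apply Rabs_triang. }
    pose proof (g'_decay y). pose proof (Rabs_pos x). pose proof (Rabs_pos y).
    pose proof (Rabs_pos k). pose proof (Rabs_pos (g' y)).
    assert (Rabs x * b <= (1 + Rabs y) * (1 + Rabs k)) by nra.
    assert (Rabs x * Rabs (g' y) * b <= B * (1 + Rabs k)) by nra.
    rewrite !Rabs_mult, (Rabs_right (a - b)) by lra.
    apply Rmult_le_compat_r; [lra|].
    apply (Rmult_le_reg_r b); [lra|]. field_simplify; lra.
Qed.

End Dilation.

Lemma scaled_sech2_dilation (a b y k : R) : 0 < b <= a ->
  Rabs (a * sech2 (a * y + k) - b * sech2 (b * y + k)) <= (1 + 4 * (1 + Rabs k)) * (a - b).
Proof.
  intros hab.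
  pose proof (dilation_lipschitz _ _ _ is_derive_sech2 Rabs_derive_sech2_decay a b y k hab) as hdil.
  pose proof (sech2_ge_0 (a * y + k)). pose proof (sech2_le_1 (a * y + k)).
  replace (a * sech2 (a * y + k) - b * sech2 (b * y + k))
    with ((a - b) * sech2 (a * y + k) + b * (sech2 (a * y + k) - sech2 (b * y + k))) by ring.
  eapply Rle_trans; [apply Rabs_triang|].
  rewrite !Rabs_mult, (Rabs_right (a - b)), (Rabs_right b), (Rabs_right (sech2 _)) by lra.
  apply (Rmult_le_compat_l b) in hdil; [|lra].
  replace (b * (4 * (1 + Rabs k) / b * (a - b))) with (4 * (1 + Rabs k) * (a - b))
    in hdil by (field; lra).
  nra.
Qed.

Lemma Rabs_inv_1_plus_mul_sub_le (m r : R) : 0 <= m -> 0 <= r ->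
  Rabs (/ (1 + m) * r - r) <= m * r.
Proof.
  intros hm hr.
  replace (/ (1 + m) * r - r) with (- (m * r / (1 + m))) by (field; lra).
  rewrite Rabs_Ropp, Rabs_right.
  - apply (Rmult_le_reg_r (1 + m)); [lra|]. field_simplify; nra.
  - apply Rle_ge, Rdiv_le_0_compat; nra.
Qed.

Lemma relaxed_sech2_dilation (a b m y k : R) : 0 < b <= a -> 0 <= m ->
  Rabs (/ (1 + m) * (a * sech2 (a * y + k)) - b * sech2 (b * y + k))
  <= m * a + (1 + 4 * (1 + Rabs k)) * (a - b).
Proof.
  intros hab hm.
  set (Sa := a * sech2 (a * y + k)).
  assert (hSa : 0 <= Sa <= a).
  { pose proof (sech2_ge_0 (a * y + k)). pose proof (sech2_le_1 (a * y + k)).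
    unfold Sa. nra. }
  replace (/ (1 + m) * Sa - b * sech2 (b * y + k))
    with ((/ (1 + m) * Sa - Sa) + (Sa - b * sech2 (b * y + k))) by ring.
  eapply Rle_trans; [apply Rabs_triang|].
  pose proof (Rabs_inv_1_plus_mul_sub_le m Sa hm ltac:(lra)).
  pose proof (scaled_sech2_dilation a b y k hab) as hdil. fold Sa in hdil.
  assert (m * Sa <= m * a) by (apply Rmult_le_compat_l; lra).
  lra.
Qed.

Lemma sqrt_sub_sqrt_le (A X : R) : 0 < A -> A <= X -> sqrt X - sqrt A <= (X - A) / sqrt A.
Proof.
  intros hA hAX.
  pose proof (sqrt_lt_R0 A hA). pose proof (sqrt_le_1_alt A X hAX).
  assert (sqrt X * sqrt X - sqrt A * sqrt A = X - A) by (rewrite !sqrt_sqrt; lra).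
  apply (Rmult_le_reg_r (sqrt A)); [lra|]. field_simplify; nra.
Qed.

Lemma Derive_scaled_tanh (s c k x : R) :
  Derive (fun x => s * tanh (c * x + k)) x = s * c * sech2 (c * x + k).
Proof.
  apply is_derive_unique.
  replace (s * c * sech2 (c * x + k)) with (s * (c * sech2 (c * x + k))) by ring.
  apply (is_derive_scal (fun x => tanh (c * x + k))).
  apply (is_derive_comp tanh (fun x => c * x + k)); [apply is_derive_tanh|].
  auto_derive; [easy | ring].
Qed.

Definition front_rate (kappa mu tau : R) : R :=
  sigma kappa mu * sqrt (kappa * (mu * tau - 1) / 2).

Section StandingFronts.

Variables kappa mu K0 s1 s2 : R.

Lemma q0t_front_rate (tau x : R) :
  q0t kappa mu K0 s1 s2 tau x
  = sigma kappa mu * tanh (front_rate kappa mu tau * (s1 * x) + s2 * K0).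
Proof. unfold q0t, front_rate. do 3 f_equal. ring. Qed.

Lemma Derive_q0t (tau x : R) :
  Derive (q0t kappa mu K0 s1 s2 tau) x
  = sigma kappa mu * s1 * (front_rate kappa mu tau
      * sech2 (front_rate kappa mu tau * (s1 * x) + s2 * K0)).
Proof.
  unfold q0t. rewrite Derive_scaled_tanh. unfold front_rate.
  set (c := sqrt (kappa * (mu * tau - 1) / 2)).
  replace (sigma kappa mu * c * (s1 * x)) with (s1 * sigma kappa mu * c * x) by ring.
  ring.
Qed.

Lemma uminus_q0t0 (x : R) : uminus kappa mu K0 s1 s2 x = q0t kappa mu K0 s1 s2 0 x.
Proof.
  unfold uminus, q0t. replace (kappa * (mu * 0 - 1) / 2) with (- kappa / 2) by lra.
  reflexivity.
Qed.

Lemma q1t0_Derive_uminus (x : R) :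
  q1t kappa mu K0 s1 s2 0 x = Derive (uminus kappa mu K0 s1 s2) x.
Proof.
  unfold q1t. rewrite (Derive_ext _ _ x uminus_q0t0), Rmult_0_r, Rminus_0_r, Rinv_1.
  apply Rmult_1_l.
Qed.

Hypotheses (kappa_neg : kappa < 0) (mu_neg : mu < 0).

Lemma sigma_pos : 0 < sigma kappa mu.
Proof.
  apply sqrt_lt_R0. replace (mu / kappa) with (- mu / - kappa) by (field; lra).
  apply Rdiv_lt_0_compat; lra.
Qed.

Lemma front_rate0_pos : 0 < front_rate kappa mu 0.
Proof.
  pose proof sigma_pos. apply Rmult_lt_0_compat; [lra|]. apply sqrt_lt_R0. nra.
Qed.

Lemma front_rate0_le (tau : R) : 0 <= tau ->
  front_rate kappa mu 0 <= front_rate kappa mu tau.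
Proof.
  intros htau. pose proof sigma_pos.
  assert (0 <= kappa * mu * tau) by (apply Rmult_le_pos; nra).
  apply Rmult_le_compat_l; [lra|]. apply sqrt_le_1_alt. lra.
Qed.

Lemma front_rate_sub_le : exists D, 0 <= D /\ forall tau, 0 <= tau ->
  front_rate kappa mu tau - front_rate kappa mu 0 <= D * tau.
Proof.
  set (A := kappa * (mu * 0 - 1) / 2).
  assert (hA : 0 < A) by (unfold A; nra).
  pose proof sigma_pos. pose proof (sqrt_lt_R0 A hA).
  assert (0 < kappa * mu) by nra.
  exists (sigma kappa mu * (kappa * mu / 2) / sqrt A). split.
  { apply Rlt_le, Rdiv_lt_0_compat; [apply Rmult_lt_0_compat|]; lra. }
  intros tau htau. unfold front_rate. fold A.
  set (X := kappa * (mu * tau - 1) / 2).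
  assert (hAX : A <= X) by (unfold A, X; nra).
  pose proof (sqrt_sub_sqrt_le A X hA hAX).
  replace (X - A) with (kappa * mu / 2 * tau) in * by (unfold A, X; lra).
  replace (sigma kappa mu * (kappa * mu / 2) / sqrt A * tau)
    with (sigma kappa mu * (kappa * mu / 2 * tau / sqrt A)) by (field; lra).
  rewrite <- Rmult_minus_distr_l. apply Rmult_le_compat_l; lra.
Qed.

Lemma q0t_sub_q0t0_le : exists C, forall tau, 0 <= tau -> forall x,
  Rabs (q0t kappa mu K0 s1 s2 tau x - q0t kappa mu K0 s1 s2 0 x) <= C * tau.
Proof.
  destruct front_rate_sub_le as [D [hD hrate]].
  pose proof sigma_pos. pose proof front_rate0_pos. pose proof (Rabs_pos (s2 * K0)).
  set (b := front_rate kappa mu 0) in *. set (k := s2 * K0) in *.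
  exists (sigma kappa mu * (2 * (1 + Rabs k) / b * D)).
  intros tau htau x. rewrite !q0t_front_rate. fold b k.
  set (a := front_rate kappa mu tau).
  assert (hab : 0 < b <= a) by (split; [lra | apply front_rate0_le, htau]).
  rewrite <- Rmult_minus_distr_l, Rabs_mult, (Rabs_right (sigma _ _)) by lra.
  rewrite !Rmult_assoc. apply Rmult_le_compat_l; [lra|].
  eapply Rle_trans; [apply (dilation_lipschitz _ _ _ is_derive_tanh Rabs_sech2_decay), hab|].
  apply Rmult_le_compat_l; [|apply hrate, htau].
  apply Rlt_le, Rdiv_lt_0_compat; lra.
Qed.

Lemma q1t_sub_q1t0_le : (s1 = 1 \/ s1 = -1) ->
  exists C, forall tau, 0 <= tau <= 1 -> forall x,
  Rabs (q1t kappa mu K0 s1 s2 tau x - q1t kappa mu K0 s1 s2 0 x) <= C * tau.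
Proof.
  intros hs1.
  assert (abs_s1 : Rabs s1 = 1)
    by (destruct hs1 as [-> | ->]; [apply Rabs_R1 | rewrite Rabs_left; lra]).
  destruct front_rate_sub_le as [D [hD hrate]].
  pose proof sigma_pos. pose proof front_rate0_pos. pose proof (Rabs_pos (s2 * K0)).
  set (b := front_rate kappa mu 0) in *. set (k := s2 * K0) in *.
  exists (sigma kappa mu * ((b + D) * - mu + (1 + 4 * (1 + Rabs k)) * D)).
  intros tau [htau0 htau1] x. unfold q1t. rewrite !Derive_q0t. fold b k.
  pose proof (hrate tau htau0) as hrate_tau.
  set (a := front_rate kappa mu tau) in *.
  assert (hab : 0 < b <= a) by (split; [lra | apply front_rate0_le, htau0]).
  assert (hm : 0 <= - mu * tau) by nra.
  replace (1 - mu * tau) with (1 + - mu * tau) by ring.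
  rewrite Rmult_0_r, Rminus_0_r, Rinv_1, Rmult_1_l.
  replace (/ (1 + - mu * tau) * (sigma kappa mu * s1 * (a * sech2 (a * (s1 * x) + k)))
           - sigma kappa mu * s1 * (b * sech2 (b * (s1 * x) + k)))
    with (sigma kappa mu * s1 * (/ (1 + - mu * tau) * (a * sech2 (a * (s1 * x) + k))
                                 - b * sech2 (b * (s1 * x) + k))) by ring.
  rewrite !Rabs_mult, abs_s1, (Rabs_right (sigma _ _)), Rmult_1_r, Rmult_assoc by lra.
  apply Rmult_le_compat_l; [lra|].
  eapply Rle_trans; [apply relaxed_sech2_dilation; assumption|].
  assert (a <= b + D) by (assert (D * tau <= D * 1) by (apply Rmult_le_compat_l; lra); lra).
  assert (- mu * tau * a <= - mu * tau * (b + D)) by (apply Rmult_le_compat_l; lra).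
  assert ((1 + 4 * (1 + Rabs k)) * (a - b) <= (1 + 4 * (1 + Rabs k)) * (D * tau))
    by (apply Rmult_le_compat_l; lra).
  lra.
Qed.

End StandingFronts.

Theorem proposition1 (kappa mu K0 s1 s2 : R) :
  kappa < 0 -> mu < 0 ->
  (s1 = 1 \/ s1 = -1) -> (s2 = 1 \/ s2 = -1) ->
  exists C tau0 : R, 0 < tau0 /\
    forall tau : R, 0 < tau < tau0 ->
      (forall x : R,
         Rabs (q0t kappa mu K0 s1 s2 tau x - uminus kappa mu K0 s1 s2 x) <= C * tau) /\
      (forall x : R,
         Rabs (q1t kappa mu K0 s1 s2 tau x
               - Derive (uminus kappa mu K0 s1 s2) x) <= C * tau).
Proof.
  intros kappa_neg mu_neg hs1 _.
  destruct (q0t_sub_q0t0_le kappa mu K0 s1 s2 kappa_neg mu_neg) as [C0 hq0].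
  destruct (q1t_sub_q1t0_le kappa mu K0 s1 s2 kappa_neg mu_neg hs1) as [C1 hq1].
  exists (Rmax C0 C1), 1. split; [lra|].
  intros tau [htau0 htau1]. split; intros x.
  - rewrite uminus_q0t0. eapply Rle_trans; [apply hq0; lra|].
    apply Rmult_le_compat_r; [lra | apply Rmax_l].
  - rewrite <- q1t0_Derive_uminus. eapply Rle_trans; [apply hq1; lra|].
    apply Rmult_le_compat_r; [lra | apply Rmax_r].
Qed.
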